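(* Let $C=(1,2,3,c_4,c_4+1,2c_4)$ with $c_4>4$. Then $C$ is canonical and the subsystem $(1,2,3,c_4,c_4+1)$ is noncanonical.
   Context: A system is a tuple $C=(c_1,\dots,c_n)$ of integers with $1=c_1<c_2<\dots<c_n$; for $k\le n$, $(c_1,\dots,c_k)$ is a subsystem. For a positive integer $v$, $\mathrm{opt}_C(v)$ is the minimum of $\sum_i x_i$ over $x\in\mathbb{Z}_{\ge0}^n$ with $\sum_i c_ix_i=v$. The greedy representation of $v$ is produced by: for $i=n$ down to $1$, while $c_i\le$ remaining value, take a coin $c_i$. $\mathrm{grd}_C(v)$ is its number of coins. A positive integer $w$ is a counterexample if $\mathrm{opt}_C(w)<\mathrm{grd}_C(w)$; $C$ is canonical if it has none, noncanonical otherwise. *)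

From mathcomp Require Import all_boot.
Set Implicit Arguments. Unset Strict Implicit. Unset Printing Implicit Defensive.

Definition is_system (C : seq nat) : bool :=
  (head 0 C == 1) && sorted ltn C.

Definition is_rep (C : seq nat) (v : nat) (x : seq nat) : Prop :=
  size x = size C /\ \sum_(i < size C) nth 0 C i * nth 0 x i = v.

(* opt_C(v) <= k  iff  some representation uses at most k coins;
   opt_C(v) < k   iff  some representation uses fewer than k coins. *)
Definition opt_lt (C : seq nat) (v k : nat) : Prop :=
  exists x, is_rep C v x /\ sumn x < k.

(* Greedy: process coins from largest to smallest; for coin c with remaining
   value r, "while c <= r take c" takes exactly r %/ c coins and leaves r %% c. *)
Fixpoint grd_desc (D : seq nat) (r : nat) : nat :=
  match D with
  | [::] => 0
  | c :: D' => r %/ c + grd_desc D' (r %% c)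
  end.

Definition grd (C : seq nat) (v : nat) : nat := grd_desc (rev C) v.

Definition counterexample (C : seq nat) (w : nat) : Prop :=
  0 < w /\ opt_lt C w (grd C w).

Definition canonical (C : seq nat) : Prop := forall w, ~ counterexample C w.
Definition noncanonical (C : seq nat) : Prop := exists w, counterexample C w.

From mathcomp Require Import all_boot zify.

(* A function that vanishes at 0 and grows by at most one when a coin is
   added is a lower bound for the number of coins of any representation.  For
   [C = (1, 2, 3, c, c + 1, 2c)] the greedy count is such a function: it is
   [w / 2c] plus the greedy count of [(1, 2, 3, c, c + 1)] at [w mod 2c], and
   below [2c] the latter has an explicit closed form.  The subsystem itself
   fails at [2c = c + c], where greedy takes [c + 1] and then
   [ceil((c - 1) / 3) >= 2] more coins. *)

Lemma grd_rcons (C : seq nat) (c w : nat) :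
  grd (rcons C c) w = w %/ c + grd C (w %% c).
Proof. by rewrite /grd rev_rcons. Qed.

Lemma grd0 (C : seq nat) : grd C 0 = 0.
Proof. by rewrite /grd; elim: (rev C) => //= c D IHD; rewrite div0n mod0n IHD. Qed.

Lemma le_sumn_rep {C : seq nat} {f : nat -> nat} :
  f 0 = 0 -> (forall w c, c \in C -> f (w + c) <= (f w).+1) ->
  forall v x, is_rep C v x -> f v <= sumn x.
Proof.
move=> f0 f_add v x [size_x <-].
have f_addn w c m : c \in C -> f (w + m * c) <= f w + m.
  move=> Cc; elim: m => [|m IHm]; first by rewrite !addn0.
  by rewrite mulSnr addnA addnS (leq_trans (f_add _ _ Cc)).
have f_prefix n : n <= size C ->
    f (\sum_(i < n) nth 0 C i * nth 0 x i) <= \sum_(i < n) nth 0 x i.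
  elim: n => [|n IHn] n_lt; first by rewrite !big_ord0 f0.
  rewrite !big_ord_recr /= [nth 0 C n * _]mulnC.
  by rewrite (leq_trans (f_addn _ _ _ (mem_nth 0 n_lt))) // leq_add2r IHn // ltnW.
by rewrite sumnE (big_nth 0) big_mkord size_x f_prefix.
Qed.

Lemma canonical_of_grd_add (C : seq nat) :
  (forall w c, c \in C -> grd C (w + c) <= (grd C w).+1) -> canonical C.
Proof.
move=> grd_add w [_ [x [rep_x lt_x]]].
by have := le_sumn_rep (grd0 C) grd_add _ _ rep_x; rewrite leqNgt lt_x.
Qed.

Lemma grd_123 (r : nat) : grd [:: 1; 2; 3] r = (r + 2) %/ 3.
Proof. rewrite /grd /=; lia. Qed.

Section TwoTimesC.

Variable c : nat.
Hypothesis c_gt4 : 4 < c.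

Let S := [:: 1; 2; 3; c; c.+1].

Lemma grd_subE (r : nat) : r <= 2 * c ->
  grd S r = if r < c then (r + 2) %/ 3 else (r - c + 1) %/ 3 + 1.
Proof.
move=> r_le; rewrite -[S]/(rcons (rcons [:: 1; 2; 3] c) c.+1).
rewrite !grd_rcons grd_123.
case: (ltnP r c) => [r_lt | r_ge].
  have r_ltS : r < c.+1 by rewrite ltnW.
  by rewrite (divn_small r_ltS) (modn_small r_ltS) divn_small // modn_small.
case: (ltnP r c.+1) => [r_ltS | r_gtc].
  have -> : r = c by lia.
  by rewrite divn_small // modn_small // divnn modnn; lia.
have lt_rest : r - c.+1 < c by lia.
have lt_restS : r - c.+1 < c.+1 by rewrite ltnW.
have -> : r = 1 * c.+1 + (r - c.+1) by lia.
rewrite divnMDl // modnMDl (divn_small lt_restS) (modn_small lt_restS).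
rewrite (divn_small lt_rest) (modn_small lt_rest); lia.
Qed.

Lemma grd_sub_add (r k : nat) : k \in S -> r + k < 2 * c ->
  grd S (r + k) <= (grd S r).+1.
Proof.
rewrite !inE => S_k lt_rk; rewrite !grd_subE; try lia.
by case: (ltnP r c); case: (ltnP (r + k) c); lia.
Qed.

Lemma grd_sub_wrap (r k : nat) : k \in S -> r < 2 * c -> 2 * c <= r + k ->
  grd S (r + k - 2 * c) <= grd S r.
Proof.
rewrite !inE => S_k lt_r le_rk; rewrite !grd_subE; try lia.
by case: (ltnP r c); case: (ltnP (r + k - 2 * c) c); lia.
Qed.

Lemma grd_add (w k : nat) : k \in rcons S (2 * c) ->
  grd (rcons S (2 * c)) (w + k) <= (grd (rcons S (2 * c)) w).+1.
Proof.
have c2_gt0 : 0 < 2 * c by lia.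
have lt_r : w %% (2 * c) < 2 * c by rewrite ltn_mod.
rewrite !grd_rcons mem_rcons inE => /orP [/eqP -> | S_k].
  by rewrite modnDr divnDr ?dvdnn // divnn c2_gt0 addn1.
rewrite {1 2}(divn_eq w (2 * c)) -addnA divnMDl // modnMDl.
move: (w %/ _) (w %% _) lt_r => q r lt_r.
case: (ltnP (r + k) (2 * c)) => [lt_rk | le_rk].
  by rewrite divn_small // modn_small // addn0 -addnS leq_add2l grd_sub_add.
have -> : r + k = 1 * (2 * c) + (r + k - 2 * c) by lia.
have lt_rk : r + k - 2 * c < 2 * c by move: S_k; rewrite !inE; lia.
rewrite divnMDl // modnMDl divn_small // modn_small // addn0 addn1 ltnS.
by rewrite leq_add2l grd_sub_wrap.
Qed.

Lemma canonical_rcons_2c : canonical (rcons S (2 * c)).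
Proof. exact/canonical_of_grd_add/grd_add. Qed.

Lemma counterexample_2c : counterexample S (2 * c).
Proof.
split; first lia.
exists [:: 0; 0; 0; 2; 0]; split.
  by split=> //; rewrite !big_ord_recl big_ord0 /=; lia.
by rewrite grd_subE // ifF /=; lia.
Qed.

End TwoTimesC.

Theorem lemma11 (c4 : nat) (hc4 : 4 < c4) :
  canonical [:: 1; 2; 3; c4; c4.+1; 2 * c4] /\
  noncanonical [:: 1; 2; 3; c4; c4.+1].
Proof.
split; first exact: canonical_rcons_2c.
by exists (2 * c4); apply: counterexample_2c.
Qed.
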